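(* Let $n\ge2$ and let $\mathbb{A}=(A_{ij})_{i,j=1}^n$ be an operator matrix as in the context, and assume that $\mathbb{A}_k$ is closed for all $k\in\{2,\ldots,n\}$. If $\sigma(A_{kk})\cup\sigma(\mathbb{A}_k)\ne\mathbb{C}$ for all $k\in\{2,\ldots,n-1\}$, then $\sigma(\mathbb{A})\subset S_n(\mathbb{A})$.
   Context: Let $X_1,\ldots,X_n$ be complex Banach spaces and $X=X_1\times\cdots\times X_n$ with norm $\|x\|=\sum_i\|x_i\|_{X_i}$. For $i,j\in\{1,\ldots,n\}$, $A_{ij}:\mathcal{D}(A_{ij})\subset X_j\to X_i$ are linear operators with $A_{ii}$ closed and, for $i\ne j$, $A_{ij}$ relatively $A_{jj}$-bounded (i.e. $\mathcal{D}(A_{jj})\subset\mathcal{D}(A_{ij})$ and there are $\alpha,\beta\ge0$ with $\|A_{ij}x\|\le\alpha\|x\|+\beta\|A_{jj}x\|$ for $x\in\mathcal{D}(A_{jj})$). The operator matrix $\mathbb{A}=(A_{ij})$ acts on $\mathcal{D}(\mathbb{A})=\mathcal{D}(A_{11})\times\cdots\times\mathcal{D}(A_{nn})$ by $(\mathbb{A}x)_i=\sum_jA_{ij}x_j$. For $1\le k\le n$, $\mathbb{A}_k:=(A_{ij})_{i,j=1}^k$ acts on $X_1\times\cdots\times X_k$ with domain $\mathcal{D}(A_{11})\times\cdots\times\mathcal{D}(A_{kk})$. For a linear operator $S$ on a Banach space $Y$, $\sigma(S)$ is the set of $\lambda$ for which $\lambda-S:\mathcal{D}(S)\to Y$ is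 not bijective with bounded inverse. For $j\ne k$ and $\lambda\notin\sigma(A_{kk})\cup\sigma(A_{jj})$ set \[ \mathcal{R}_{kj}(\lambda):=\sum_{i=1,i\ne k}^n\Big\|\Big(A_{ik}(\lambda-A_{kk})^{-1}A_{kj}+(1-\delta_{ij})A_{ij}\Big)(\lambda-A_{jj})^{-1}\Big\|, \] ($\delta_{ij}$ the Kronecker delta, norms are operator norms $X_j\to X_i$), the Schur sets $S_{kj}(\mathbb{A}):=\sigma(A_{kk})\cup\sigma(A_{jj})\cup\{\lambda\in\mathbb{C}\setminus(\sigma(A_{kk})\cup\sigma(A_{jj})):\mathcal{R}_{kj}(\lambda)\ge1\}$, and $S_k(\mathbb{A}):=\bigcup_{j=1,j\ne k}^nS_{kj}(\mathbb{A})$. *)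

(* Complex scalars: R[i] for R : realType
   (mathcomp-real-closed's complex numbers); complex Banach spaces are
   completeNormedModType R[i]. *)
From HB Require Import structures.
From mathcomp Require Import all_boot all_order all_algebra.
From mathcomp Require Import all_classical all_reals all_analysis.
From mathcomp Require Import complex.
From Stdlib Require Import ClassicalEpsilon.
Set Implicit Arguments. Unset Strict Implicit. Unset Printing Implicit Defensive.
Import Order.TTheory GRing.Theory Num.Theory.
Local Open Scope ring_scope.
Local Open Scope classical_set_scope.

(* A (possibly unbounded) operator X -> Y: a domain and an action
   (the values of [app] outside [dom] are irrelevant). *)
Record op (R : realType) (X Y : completeNormedModType R[i]) := Op {
  dom : set X;
  app : X -> Y }.
Arguments dom {R X Y}.
Arguments app {R X Y}.

Section Defs.
Variable R : realType.
Local Notation C := R[i].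

Definition linear_op (X Y : completeNormedModType C) (T : op X Y) : Prop :=
  dom T 0 /\
  (forall x y, dom T x -> dom T y -> dom T (x + y)) /\
  (forall (a : C) x, dom T x -> dom T (a *: x)) /\
  (forall x y, dom T x -> dom T y -> app T (x + y) = app T x + app T y) /\
  (forall (a : C) x, dom T x -> app T (a *: x) = a *: app T x).

Definition closed_op (X Y : completeNormedModType C) (T : op X Y) : Prop :=
  forall (u : nat -> X) (x : X) (y : Y),
    (forall t, dom T (u t)) ->
    u @ \oo --> x -> (fun t => app T (u t)) @ \oo --> y ->
    dom T x /\ app T x = y.

Definition rel_bounded (X Y : completeNormedModType C) (T : op X Y) (S : op X X)
  : Prop :=
  (forall x, dom S x -> dom T x) /\
  exists alpha beta : C, 0 <= alpha /\ 0 <= beta /\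
    forall x, dom S x -> `|app T x| <= alpha * `|x| + beta * `|app S x|.

Definition is_resolvent (X : completeNormedModType C) (S : op X X) (lam : C)
    (Rs : X -> X) : Prop :=
  (forall y, dom S (Rs y)) /\
  (forall y, lam *: Rs y - app S (Rs y) = y) /\
  (forall x, dom S x -> Rs (lam *: x - app S x) = x) /\
  exists M : C, forall y, `|Rs y| <= M * `|y|.

Definition spectrum (X : completeNormedModType C) (S : op X X) : set C :=
  [set lam | ~ exists Rs, is_resolvent S lam Rs].

(* the resolvent (lam - S)^{-1}; meaningful when lam is not in the spectrum,
   where it is unique *)
Definition resolvent (X : completeNormedModType C) (S : op X X) (lam : C) : X -> X :=
  epsilon (inhabits (fun _ => 0)) (is_resolvent S lam).

Definition opnorm (X Y : completeNormedModType C) (T : X -> Y) : \bar R :=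
  ereal_sup [set (complex.Re `|T x|)%:E | x in [set x : X | `|x| <= 1]].

Definition sumnorm m (X : 'I_m -> completeNormedModType C) (x : forall i, X i) : C :=
  \sum_(i < m) `|x i|.

Definition mx_dom m (X : 'I_m -> completeNormedModType C)
    (A : forall i j : 'I_m, op (X j) (X i)) : set (forall i, X i) :=
  [set x | forall i, dom (A i i) (x i)].

Definition mx_app m (X : 'I_m -> completeNormedModType C)
    (A : forall i j : 'I_m, op (X j) (X i)) (x : forall i, X i) : forall i, X i :=
  fun i => \sum_(j < m) app (A i j) (x j).

(* the operator matrix is closed (graph closed in the product, whose sum-norm
   topology is the product topology) *)
Definition mx_closed m (X : 'I_m -> completeNormedModType C)
    (A : forall i j : 'I_m, op (X j) (X i)) : Prop :=
  forall (u : nat -> forall i, X i) (x y : forall i, X i),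
    (forall t, mx_dom A (u t)) ->
    (forall i, (fun t => u t i) @ \oo --> x i) ->
    (forall i, (fun t => mx_app A (u t) i) @ \oo --> y i) ->
    mx_dom A x /\ mx_app A x = y.

Definition mx_is_resolvent m (X : 'I_m -> completeNormedModType C)
    (A : forall i j : 'I_m, op (X j) (X i)) (lam : C)
    (Rs : (forall i, X i) -> (forall i, X i)) : Prop :=
  (forall y, mx_dom A (Rs y)) /\
  (forall y i, lam *: Rs y i - mx_app A (Rs y) i = y i) /\
  (forall x, mx_dom A x ->
     Rs (fun i => lam *: x i - mx_app A x i) = x) /\
  exists M : C, forall y, sumnorm (Rs y) <= M * sumnorm y.

Definition mx_spectrum m (X : 'I_m -> completeNormedModType C)
    (A : forall i j : 'I_m, op (X j) (X i)) : set C :=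
  [set lam | ~ exists Rs, mx_is_resolvent A lam Rs].

(* the upper-left k x k corner A_k = (A_ij)_{i,j=1..k}, for k <= n *)
Definition cornerfam n k (hk : (k <= n)%N) (X : 'I_n -> completeNormedModType C) :
  'I_k -> completeNormedModType C := fun i => X (widen_ord hk i).

Definition cornermx n k (hk : (k <= n)%N) (X : 'I_n -> completeNormedModType C)
    (A : forall i j : 'I_n, op (X j) (X i)) :
    forall i j : 'I_k, op (cornerfam hk X j) (cornerfam hk X i) :=
  fun i j => A (widen_ord hk i) (widen_ord hk j).

(* R_kj(lam) (indices 0-based here) *)
Definition schurR n (X : 'I_n -> completeNormedModType C)
    (A : forall i j : 'I_n, op (X j) (X i)) (k j : 'I_n) (lam : C) : \bar R :=
  (\sum_(i < n | i != k)
     opnorm (fun y : X j =>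
       (app (A i k) (resolvent (A k k) lam (app (A k j) (resolvent (A j j) lam y)))
       + (if i != j then app (A i j) (resolvent (A j j) lam y) else 0))%R))%E.

Definition schur_set2 n (X : 'I_n -> completeNormedModType C)
    (A : forall i j : 'I_n, op (X j) (X i)) (k j : 'I_n) : set C :=
  spectrum (A k k) `|` spectrum (A j j) `|`
  [set lam | ~ spectrum (A k k) lam /\ ~ spectrum (A j j) lam /\
             (1 <= schurR A k j lam)%E].

Definition schur_set n (X : 'I_n -> completeNormedModType C)
    (A : forall i j : 'I_n, op (X j) (X i)) (k : 'I_n) : set C :=
  [set lam | exists j : 'I_n, j != k /\ schur_set2 A k j lam].

End Defs.

From HB Require Import structures.
From mathcomp Require Import all_boot all_order all_algebra.
From mathcomp Require Import all_classical all_reals all_analysis.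
From mathcomp Require Import complex.
From mathcomp Require Import lra.
From Stdlib Require Import ClassicalEpsilon.
Set Implicit Arguments. Unset Strict Implicit. Unset Printing Implicit Defensive.
Import Order.TTheory GRing.Theory Num.Theory.
Local Open Scope ring_scope.
Local Open Scope classical_set_scope.

(* Let lam lie outside S_n(A): the diagonal resolvents r_j = (lam - A_jj)^-1 exist and
   R_nj(lam) < 1 for every j <> n.  Substituting x_j = r_j z_j turns (lam - A) x = y into
   (I - B) z = y with B_ij = A_ij r_j off the diagonal.  Adding B_in times the n-th
   equation to the i-th one eliminates z_n; the remaining unknowns solve an affine
   fixed-point equation whose linear part has column sums of norms bounded by R_nj(lam) < 1,
   hence is a contraction for the sum norm.  Banach's fixed-point theorem and the resulting
   a-priori estimate yield a bounded inverse of lam - A. *)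

Section RealNorm.
Variable R : realType.
Local Notation C := R[i].
Local Open Scope complex_scope.

Definition rnorm (X : normedModType C) (x : X) : R := complex.Re `|x|.

Lemma ge0_ReE (z : C) : 0 <= z -> z = (complex.Re z)%:C.
Proof. by move=> z0; rewrite RRe_real // ger0_real. Qed.

Lemma Re_ge0 (z : C) : 0 <= z -> 0 <= complex.Re z.
Proof. by move=> z0; rewrite -ler0c -ge0_ReE. Qed.

Lemma le_Re_mulrC (c a : C) (b : R) : c <= a * b%:C -> complex.Re c <= complex.Re a * b.
Proof. by case: a => a1 a2; rewrite lecE => /andP[_] /=; rewrite !mulr0 subr0. Qed.

Variable X : normedModType C.
Implicit Types x y : X.

Lemma rnormE x : `|x| = (rnorm x)%:C.
Proof. exact: ge0_ReE. Qed.

Lemma rnorm_ge0 x : 0 <= rnorm x.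
Proof. by rewrite -ler0c -rnormE. Qed.

Lemma rnorm0 : rnorm (0 : X) = 0.
Proof. by rewrite /rnorm normr0. Qed.

Lemma rnorm_eq0 x : rnorm x = 0 -> x = 0.
Proof. by move=> h; apply/normr0_eq0; rewrite rnormE h. Qed.

Lemma rnormN x : rnorm (- x) = rnorm x.
Proof. by rewrite /rnorm normrN. Qed.

Lemma rnormB x y : rnorm (x - y) = rnorm (y - x).
Proof. by rewrite /rnorm distrC. Qed.

Lemma ler_rnormD x y : rnorm (x + y) <= rnorm x + rnorm y.
Proof. by rewrite -lecR rmorphD /= -!rnormE ler_normD. Qed.

Lemma rnormZ (a : C) x : rnorm (a *: x) = complex.Re `|a| * rnorm x.
Proof. by apply: complexI; rewrite rmorphM /= -rnormE -ge0_ReE // normrZ. Qed.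

Lemma ler_rnorm_sum (I : finType) (P : pred I) (f : I -> X) :
  rnorm (\sum_(i | P i) f i) <= \sum_(i | P i) rnorm (f i).
Proof.
elim/big_rec2: _ => [|i y1 y2 _ h]; first by rewrite rnorm0.
by apply: le_trans (ler_rnormD _ _) _; rewrite lerD2l.
Qed.

Lemma cvg_rnormP (u : nat -> X) x :
  u @ \oo --> x <-> forall e : R, 0 < e -> \forall t \near \oo, rnorm (x - u t) < e.
Proof.
rewrite cvgrPdist_lt; split=> h e e0.
- have /h : 0 < e%:C by rewrite ltcR.
  by apply: filterS => t; rewrite rnormE ltcR.
- have /h : 0 < complex.Re e by rewrite -ltcR -ge0_ReE // ltW.
  by apply: filterS => t; rewrite -ltcR -rnormE -ge0_ReE // ltW.
Qed.

End RealNorm.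

Lemma cauchy_rnorm_cvg (R : realType) (X : completeNormedModType R[i]) (u : nat -> X) :
  (forall e : R, 0 < e -> exists N, forall t, (N <= t)%N -> rnorm (u N - u t) < e) ->
  cvgn u.
Proof.
move=> h; apply: cauchy_cvg; apply: cauchy_exP => e e0.
have [N hN] : exists N, forall t, (N <= t)%N -> rnorm (u N - u t) < complex.Re e.
  by apply: h; rewrite -ltcR -ge0_ReE // ltW.
exists (u N); exists N => // t /hN; rewrite -ball_normE /ball_ /=.
by rewrite -ltcR -rnormE -ge0_ReE // ltW.
Qed.

Section ProductNorm.
Variables (R : realType) (n : nat) (X : 'I_n -> completeNormedModType R[i]).
Local Notation V := (forall i, X i).
Implicit Types u v w : V.

Definition pnorm u : R := \sum_i rnorm (u i).

Definition pdist u v : R := pnorm (fun i => u i - v i).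

Lemma pnorm_ge0 u : 0 <= pnorm u.
Proof. by apply: sumr_ge0 => i _; exact: rnorm_ge0. Qed.

Lemma pdist_ge0 u v : 0 <= pdist u v.
Proof. exact: pnorm_ge0. Qed.

Lemma rnorm_le_pnorm u i : rnorm (u i) <= pnorm u.
Proof. by rewrite /pnorm (bigD1 i) //= lerDl; apply: sumr_ge0 => k _; exact: rnorm_ge0. Qed.

Lemma ler_pnormD u v : pnorm (fun i => u i + v i) <= pnorm u + pnorm v.
Proof. by rewrite /pnorm -big_split; apply: ler_sum => i _; exact: ler_rnormD. Qed.

Lemma pnorm0 : pnorm (fun i => 0) = 0.
Proof. by rewrite /pnorm big1 // => i _; rewrite rnorm0. Qed.

Lemma pdistxx u : pdist u u = 0.
Proof. by rewrite /pdist -pnorm0; congr pnorm; apply: functional_extensionality_dep => i; rewrite subrr. Qed.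

Lemma sumnormE u : sumnorm u = ((pnorm u)%:C)%C.
Proof. by rewrite /sumnorm /pnorm rmorph_sum; apply: eq_bigr => i _; rewrite rnormE. Qed.

Lemma pdistC u v : pdist u v = pdist v u.
Proof. by apply: eq_bigr => i _; rewrite rnormB. Qed.

Lemma ler_pdist_triangle u v w : pdist u w <= pdist u v + pdist v w.
Proof.
rewrite /pdist /pnorm -big_split /=; apply: ler_sum => i _.
by rewrite -(subrKA (v i)); exact: ler_rnormD.
Qed.

Lemma pnorm_eq0 u : pnorm u = 0 -> u = fun i => 0.
Proof.
move=> u0; apply: functional_extensionality_dep => i; apply: rnorm_eq0.
by apply/eqP; rewrite eq_le rnorm_ge0 andbT -u0 rnorm_le_pnorm.
Qed.

Lemma pdist_eq0 u v : pdist u v = 0 -> u = v.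
Proof.
move=> /pnorm_eq0 uv; apply: functional_extensionality_dep => i.
by apply: subr0_eq; move/(congr1 (fun f => f i)): uv.
Qed.

Lemma pdist_cvg0 (s : nat -> V) u :
  (forall i, (fun t => s t i) @ \oo --> u i) ->
  forall e : R, 0 < e -> \forall t \near \oo, pdist u (s t) < e.
Proof.
move=> su e e0.
have en0 : 0 < e / n.+1%:R by rewrite divr_gt0.
have /filter_forall : forall i, \forall t \near \oo, rnorm (u i - s t i) < e / n.+1%:R.
  by move=> i; exact: (proj1 (cvg_rnormP _ _) (su i)).
apply: filterS => t ht; apply: le_lt_trans (_ : \sum_(i < n) e / n.+1%:R < e).
  by apply: ler_sum => i _; exact/ltW/ht.
rewrite sumr_const card_ord -[_ *+ n]mulr_natl mulrCA gtr_pMr //.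
by rewrite ltr_pdivrMr ?ltr0n // mul1r ltr_nat.
Qed.

End ProductNorm.

Section Contraction.
Variables (R : realType) (n : nat) (X : 'I_n -> completeNormedModType R[i]).
Local Notation V := (forall i, X i).
Variables (Phi : V -> V) (q : R).
Hypotheses (q_ge0 : 0 <= q) (q_lt1 : q < 1).
Hypothesis Phi_contr : forall u v, pdist (Phi u) (Phi v) <= q * pdist u v.

Lemma pdist_iter u v m : pdist (iter m Phi u) (iter m Phi v) <= q ^+ m * pdist u v.
Proof.
elim: m => [|m ih]; first by rewrite expr0 mul1r.
rewrite !iterS exprS -mulrA; apply: le_trans (Phi_contr _ _) _.
exact: ler_wpM2l.
Qed.

Lemma pdist_iter_start u k : pdist (iter k Phi u) u <= pdist (Phi u) u / (1 - q).
Proof.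
have q1 : 0 < 1 - q by rewrite subr_gt0.
elim: k => [|k ih].
  by rewrite pdistxx divr_ge0 ?pdist_ge0 // ltW.
have q1' : 1 - q != 0 by rewrite gt_eqF.
rewrite iterS; set d := pdist (Phi u) u.
apply: le_trans (ler_pdist_triangle _ (Phi u) _) _.
apply: le_trans (_ : q * (d / (1 - q)) + d <= _).
  by rewrite lerD2r; apply: le_trans (Phi_contr _ _) _; rewrite ler_wpM2l.
rewrite -[X in _ + X <= _](divfK q1') [q * _]mulrC -mulrDr [q + _]addrC subrK.
by rewrite mulr1.
Qed.

Lemma pdist_iter_shift u m k :
  pdist (iter m Phi u) (iter (k + m) Phi u) <= q ^+ m * (pdist (Phi u) u / (1 - q)).
Proof.
rewrite addnC iterD; apply: le_trans (pdist_iter _ _ _) _.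
by rewrite pdistC ler_wpM2l ?exprn_ge0 ?pdist_iter_start.
Qed.

Lemma cvg_iter_coord u i : cvgn (fun t => iter t Phi u i).
Proof.
apply: cauchy_rnorm_cvg => e e0.
have q1 : `|q| < 1 by rewrite ger0_norm.
have [N _ hN] := proj1 (cvgrPdist_lt _ _) (cvg_geometric (pdist (Phi u) u / (1 - q)) q1) e e0.
exists N => t Nt; rewrite -(subnK Nt).
apply: le_lt_trans (rnorm_le_pnorm (fun i => _ - _) i) _.
apply: le_lt_trans (pdist_iter_shift _ _ _) _.
have := hN N (leqnn N); rewrite /geometric /= sub0r normrN mulrC ger0_norm //.
by rewrite mulr_ge0 ?exprn_ge0 // divr_ge0 ?pdist_ge0 // subr_ge0 ltW.
Qed.

Lemma contraction_fixpoint : exists u, Phi u = u.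
Proof.
pose s t := iter t Phi (fun i => 0).
pose u i := limn (fun t => s t i).
have su : forall i, (fun t => s t i) @ \oo --> u i by move=> i; exact: cvg_iter_coord.
exists u; apply: pdist_eq0; apply/eqP; rewrite eq_le pdist_ge0 andbT.
apply/ler_addgt0Pr => e e0; rewrite add0r.
have [N _ hN] := pdist_cvg0 su (divr_gt0 e0 (ltr0Sn _ 1)).
apply: le_trans (ler_pdist_triangle _ (s N.+1) _) _.
rewrite [e]splitr; apply: lerD; last by rewrite pdistC; exact: ltW (hN _ (leqnSn N)).
apply: le_trans (Phi_contr u (s N)) _.
apply: le_trans (_ : 1 * pdist u (s N) <= _); first by rewrite ler_wpM2r ?pdist_ge0 ?ltW.
by rewrite mul1r; exact: ltW (hN _ (leqnn N)).
Qed.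

End Contraction.

Section AffineContraction.
Variables (R : realType) (n : nat) (X : 'I_n -> completeNormedModType R[i]).
Local Notation V := (forall i, X i).
Variables (L : V -> V) (q : R).
Hypotheses (q_ge0 : 0 <= q) (q_lt1 : q < 1).
Hypothesis L_sub : forall u v i, L (fun j => u j - v j) i = L u i - L v i.
Hypothesis L_bound : forall u, pnorm (L u) <= q * pnorm u.

Lemma affine_fixpoint w : exists u, forall i, w i + L u i = u i.
Proof.
have contr u v : pdist (fun i => w i + L u i) (fun i => w i + L v i) <= q * pdist u v.
  rewrite /pdist (_ : (fun i => _) = L (fun j => u j - v j)); first exact: L_bound.
  by apply: functional_extensionality_dep => i; rewrite L_sub opprD addrACA subrr add0r.
have [u uE] := contraction_fixpoint q_ge0 q_lt1 contr.
by exists u => i; rewrite -[in RHS]uE.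
Qed.

Lemma affine_fixpoint_bound w u :
  (forall i, w i + L u i = u i) -> pnorm u <= pnorm w / (1 - q).
Proof.
move=> uE; rewrite ler_pdivlMr ?subr_gt0 // mulrBr mulr1 lerBlDr [_ * q]mulrC.
apply: le_trans (_ : pnorm u <= pnorm w + pnorm (L u)) _; last by rewrite lerD2l.
have {1}-> : u = fun i => w i + L u i by apply: functional_extensionality_dep => i; rewrite uE.
exact: ler_pnormD.
Qed.

End AffineContraction.

Section SchurReduction.
Variables (R : realType) (n : nat) (X : 'I_n -> completeNormedModType R[i]).
Local Notation V := (forall i, X i).
Variable B : forall i j : 'I_n, {additive X j -> X i}.
Variable l : 'I_n.

Definition id_sub_offdiag (z : V) : V := fun i => z i - \sum_(j | j != i) B i j (z j).

(* With B_ij = A_ij (lam - A_jj)^-1, the norms of [schur_entry i j] summed over i <> l give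
   the paper's R_lj(lam), the paper's k being l here. *)
Definition schur_entry (i j : 'I_n) (y : X j) : X i :=
  B i l (B l j y) + (if i != j then B i j y else 0).
Arguments schur_entry : clear implicits.

Definition schur_reduced (u : V) : V :=
  fun i => if i == l then 0 else \sum_(j | j != l) schur_entry i j (u j).

Lemma id_sub_offdiagB (z z' : V) i :
  id_sub_offdiag (fun j => z j - z' j) i = id_sub_offdiag z i - id_sub_offdiag z' i.
Proof.
rewrite /id_sub_offdiag.
under eq_bigr => j _ do rewrite raddfB.
rewrite sumrB [in LHS]opprB [in RHS]opprB [in LHS]addrACA [in RHS]addrACA.
by rewrite [- z' i + _]addrC.
Qed.

Lemma id_sub_offdiag_elim z i : i != l ->
  id_sub_offdiag z i + B i l (id_sub_offdiag z l) =
  z i - \sum_(j | j != l) schur_entry i j (z j).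
Proof.
move=> il; rewrite /id_sub_offdiag /schur_entry (raddfB (B i l)) (raddf_sum (B i l)).
rewrite big_split /= (bigD1 l) 1?eq_sym //= -big_mkcondr /=.
rewrite (eq_bigl (fun j => (j != l) && (i != j))); last by move=> j; rewrite andbC [j == i]eq_sym.
by rewrite !opprD [z i + (_ + _)]addrA addrACA subrK; congr (_ + _); exact: addrC.
Qed.

Lemma schur_reducedB u v i :
  schur_reduced (fun j => u j - v j) i = schur_reduced u i - schur_reduced v i.
Proof.
rewrite /schur_reduced; case: (i == l); first by rewrite subr0.
rewrite -sumrB; apply: eq_bigr => j _; rewrite /schur_entry !raddfB.
by case: (i != j); rewrite ?addr0 // opprD addrACA.
Qed.

Variable q : R.
Hypotheses (q_ge0 : 0 <= q) (q_lt1 : q < 1).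
Hypothesis schur_col_bound : forall j, j != l -> forall y : X j,
  \sum_(i | i != l) rnorm (schur_entry i j y) <= q * rnorm y.

Lemma pnorm_schur_reduced u : pnorm (schur_reduced u) <= q * pnorm u.
Proof.
rewrite /pnorm (bigD1 l) //= {1}/schur_reduced eqxx rnorm0 add0r.
apply: le_trans (_ : \sum_(i | i != l) \sum_(j | j != l) rnorm (schur_entry i j (u j)) <= _).
  apply: ler_sum => i il; rewrite /schur_reduced (negbTE il); exact: ler_rnorm_sum.
rewrite exchange_big /=.
apply: le_trans (_ : \sum_(j | j != l) q * rnorm (u j) <= _).
  by apply: ler_sum => j jl; exact: schur_col_bound.
rewrite -mulr_sumr ler_wpM2l // [X in _ <= X](bigD1 l) //= lerDr.
exact: rnorm_ge0.
Qed.

Lemma id_sub_offdiag_surj y : exists z, id_sub_offdiag z = y.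
Proof.
pose w i := if i == l then 0 else y i + B i l (y l).
have [u uE] := affine_fixpoint q_ge0 q_lt1 schur_reducedB pnorm_schur_reduced w.
pose z i := if i == l then y i + \sum_(j | j != l) B i j (u j) else u i.
have zu j : j != l -> z j = u j by rewrite /z => /negbTE ->.
have zl : id_sub_offdiag z l = y l.
  rewrite /id_sub_offdiag.
  have -> : \sum_(j | j != l) B l j (z j) = \sum_(j | j != l) B l j (u j).
    by apply: eq_bigr => j /zu ->.
  by rewrite {1}/z eqxx addrK.
exists z; apply: functional_extensionality_dep => i.
have [->|il] := eqVneq i l; first exact: zl.
apply: (addIr (B i l (y l))); rewrite -{1}zl id_sub_offdiag_elim // zu //.
rewrite (eq_bigr (fun j => schur_entry i j (u j))); last by move=> j /zu ->.
by rewrite -[u i]uE /w /schur_reduced (negbTE il) addrK.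
Qed.

Variable cB : R.
Hypothesis cB_ge0 : 0 <= cB.
Hypothesis B_bound : forall i j (y : X j), rnorm (B i j y) <= cB * rnorm y.

Lemma id_sub_offdiag_bounded_below :
  exists M, 0 <= M /\ forall z, pnorm z <= M * pnorm (id_sub_offdiag z).
Proof.
have q1 : 0 < 1 - q by rewrite subr_gt0.
pose t := n%:R * (1 + cB) / (1 - q).
have t_ge0 : 0 <= t by apply: divr_ge0 (ltW q1); rewrite mulr_ge0 ?addr_ge0.
exists (1 + (1 + cB) * t); split; first exact: addr_ge0 ler01 (mulr_ge0 (addr_ge0 ler01 cB_ge0) t_ge0).
move=> z; set y := id_sub_offdiag z.
pose w i := if i == l then 0 else y i + B i l (y l).
pose u i := if i == l then 0 else z i.
have uE i : w i + schur_reduced u i = u i.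
  rewrite /w /schur_reduced /u; have [_|il] := eqVneq i l; first by rewrite addr0.
  rewrite (eq_bigr (fun j => schur_entry i j (z j))) => [|j /negbTE -> //].
  by rewrite /y id_sub_offdiag_elim // subrK.
have u_le : pnorm u <= t * pnorm y.
  apply: le_trans (affine_fixpoint_bound q_lt1 pnorm_schur_reduced uE) _.
  rewrite /t mulrAC ler_pM2r ?invr_gt0 //.
  apply: le_trans (_ : \sum_(i < n) (1 + cB) * pnorm y <= _); last first.
    by rewrite sumr_const card_ord -[_ *+ n]mulr_natl mulrA.
  apply: ler_sum => i _; rewrite /w; case: (i == l) => /=.
    by rewrite rnorm0 mulr_ge0 ?addr_ge0 ?pnorm_ge0.
  apply: le_trans (ler_rnormD (y i) _) _; rewrite mulrDl mul1r; apply: lerD; first exact: rnorm_le_pnorm.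
  by apply: le_trans (@B_bound i l (y l)) _; rewrite ler_wpM2l ?rnorm_le_pnorm.
have zl_le : rnorm (z l) <= pnorm y + cB * pnorm u.
  have -> : z l = y l + \sum_(j | j != l) B l j (z j) by rewrite /y /id_sub_offdiag subrK.
  apply: le_trans (ler_rnormD _ _) _; apply: lerD; first exact: rnorm_le_pnorm.
  apply: le_trans (ler_rnorm_sum _ _) _.
  rewrite /pnorm [X in _ <= _ * X](bigD1 l) //= /u eqxx rnorm0 add0r mulr_sumr.
  by apply: ler_sum => j /negbTE jl; rewrite jl; exact: B_bound.
have -> : pnorm z = rnorm (z l) + pnorm u.
  rewrite /pnorm (bigD1 l) //= [in RHS](bigD1 l) //= /u eqxx rnorm0 add0r.
  by congr (_ + _); apply: eq_bigr => j /negbTE ->.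
have : 0 <= cB * (t * pnorm y - pnorm u) by rewrite mulr_ge0 // subr_ge0.
nra.
Qed.

End SchurReduction.

Arguments schur_entry {R n X} B l i j y.

Section LinearOperator.
Variables (R : realType) (Y Z : completeNormedModType R[i]) (T : op Y Z).
Hypothesis linT : linear_op T.

Lemma linop_domD x y : dom T x -> dom T y -> dom T (x + y).
Proof. by case: linT => _ [+ _]; apply. Qed.

Lemma linop_domZ a x : dom T x -> dom T (a *: x).
Proof. by case: linT => _ [_ [+ _]]; apply. Qed.

Lemma linop_appD x y : dom T x -> dom T y -> app T (x + y) = app T x + app T y.
Proof. by case: linT => _ [_ [_ [+ _]]]; apply. Qed.

Lemma linop_appZ a x : dom T x -> app T (a *: x) = a *: app T x.
Proof. by case: linT => _ [_ [_ [_ +]]]; apply. Qed.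

Lemma linop_app0 : app T 0 = 0.
Proof.
by rewrite -(scale0r (0 : Y)) linop_appZ ?scale0r //; case: linT.
Qed.

End LinearOperator.

Section Resolvent.
Variables (R : realType) (Y : completeNormedModType R[i]) (S : op Y Y).
Variables (lam : R[i]) (Rs : Y -> Y).
Hypothesis linS : linear_op S.
Hypothesis RsS : is_resolvent S lam Rs.

Lemma res_dom y : dom S (Rs y).
Proof. by case: RsS => + _; apply. Qed.

Lemma res_eq y : lam *: Rs y - app S (Rs y) = y.
Proof. by case: RsS => _ [+ _]; apply. Qed.

Lemma res_inv x : dom S x -> Rs (lam *: x - app S x) = x.
Proof. by case: RsS => _ [_ [+ _]]; apply. Qed.

Lemma res_app y : app S (Rs y) = lam *: Rs y - y.
Proof. by rewrite -{3}(res_eq y) opprB addrC subrK. Qed.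

Lemma resD y y' : Rs (y + y') = Rs y + Rs y'.
Proof.
have dy := res_dom y; have dy' := res_dom y'.
rewrite -{1}(res_eq y) -{1}(res_eq y') -[RHS](res_inv (linop_domD linS dy dy')).
by rewrite scalerDr linop_appD // opprD addrACA.
Qed.

Lemma resZ (a : R[i]) y : Rs (a *: y) = a *: Rs y.
Proof.
have dy := res_dom y.
rewrite -{1}(res_eq y) -[RHS](res_inv (linop_domZ linS a dy)).
by rewrite linop_appZ // scalerBr !scalerA mulrC.
Qed.

Lemma res_bounded : exists c : R, 0 <= c /\ forall y, rnorm (Rs y) <= c * rnorm y.
Proof.
case: RsS => _ [_ [_ [M hM]]]; exists `|complex.Re M|; split => // y.
have := hM y; rewrite !rnormE => /le_Re_mulrC /le_trans; apply.
by rewrite ler_wpM2r ?rnorm_ge0 // real_ler_norm // num_real.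
Qed.

End Resolvent.

Lemma resolventP (R : realType) (Y : completeNormedModType R[i]) (S : op Y Y) lam :
  ~ spectrum S lam -> is_resolvent S lam (resolvent S lam).
Proof. by move=> /contrapT; exact: epsilon_spec. Qed.

Section OperatorNorm.
Variables (R : realType) (Y Z : completeNormedModType R[i]) (f : Y -> Z).
Hypothesis fZ : forall (a : R[i]) y, f (a *: y) = a *: f y.
Local Open Scope complex_scope.

Let f0 : f 0 = 0.
Proof. by rewrite -(scale0r (0 : Y)) fZ scale0r. Qed.

Lemma opnorm_ge0 : (0 <= opnorm f)%E.
Proof.
apply: ereal_sup_ubound; exists 0; last by rewrite f0 normr0.
by rewrite /= normr0 ler01.
Qed.

Lemma opnorm_le y : ((rnorm (f y))%:E <= opnorm f * (rnorm y)%:E)%E.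
Proof.
have [->|y0] := eqVneq y 0; first by rewrite f0 !rnorm0 mule0.
have ny0 : 0 < rnorm y.
  by rewrite lt_def rnorm_ge0 andbT; apply: contra_neq y0; exact: rnorm_eq0.
pose y' := ((rnorm y)^-1)%:C *: y.
have ny' : rnorm y' = 1.
  by rewrite /y' rnormZ ger0_norm ?ler0c ?invr_ge0 ?rnorm_ge0 //= mulVf ?gt_eqF.
have : ((rnorm (f y'))%:E <= opnorm f)%E.
  by apply: ereal_sup_ubound; exists y' => //=; rewrite rnormE ny'.
rewrite /y' fZ rnormZ ger0_norm ?ler0c ?invr_ge0 ?rnorm_ge0 //= => h.
have -> : rnorm (f y) = (rnorm y)^-1 * rnorm (f y) * rnorm y.
  by rewrite mulrAC mulVf ?gt_eqF // mul1r.
by rewrite EFinM; apply: lee_wpmul2r => //; rewrite lee_fin rnorm_ge0.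
Qed.

End OperatorNorm.

Lemma finite_uniform_bound (R : realType) (I : finType) (P : I -> R -> Prop) :
  (forall i c c', P i c -> c <= c' -> P i c') ->
  (forall i, exists c, 0 <= c /\ P i c) -> exists c, 0 <= c /\ forall i, P i c.
Proof.
move=> Pmono hP; have /choice [c hc] := hP.
exists (\sum_i c i); split; first by apply: sumr_ge0 => i _; case: (hc i).
move=> i; apply: (Pmono i (c i)); first by case: (hc i).
by rewrite (bigD1 i) //= lerDl; apply: sumr_ge0 => k _; case: (hc k).
Qed.

Section SchurComplement.
Variables (R : realType) (n : nat) (X : 'I_n -> completeNormedModType R[i]).
Variables (A : forall i j : 'I_n, op (X j) (X i)) (lam : R[i]) (l : 'I_n).
Hypothesis linA : forall i j, linear_op (A i j).
Hypothesis relbA : forall i j, i != j -> rel_bounded (A i j) (A j j).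
Hypothesis res_diag : forall j, ~ spectrum (A j j) lam.
Hypothesis schur_lt1 : forall j, j != l -> (schurR A l j lam < 1)%E.

Local Notation r j := (resolvent (A j j) lam).

Let rA j : is_resolvent (A j j) lam (r j) := resolventP (@res_diag j).

Lemma dom_resolvent i j y : dom (A i j) (r j y).
Proof.
have [->|ij] := eqVneq i j; first exact: res_dom (rA j) y.
by case: (relbA ij) => + _; apply; exact: res_dom (rA j) y.
Qed.

Definition Ares i j (y : X j) : X i := app (A i j) (r j y).
Arguments Ares : clear implicits.

Lemma Ares_nmod_morphism i j : nmod_morphism (Ares i j).
Proof.
have rD := resD (linA j j) (rA j).
have r0 : r j 0 = 0 by apply: (addrI (r j 0)); rewrite -rD !addr0.
split; first by rewrite /Ares r0; exact: linop_app0 (linA i j).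
by move=> y y'; rewrite /Ares rD (linop_appD (linA i j)) //; exact: dom_resolvent.
Qed.

HB.instance Definition _ i j :=
  GRing.isNmodMorphism.Build (X j) (X i) (Ares i j) (Ares_nmod_morphism i j).

Definition AresA i j : {additive X j -> X i} := Ares i j.

Lemma AresZ i j a y : Ares i j (a *: y) = a *: Ares i j y.
Proof.
by rewrite /Ares (resZ (linA j j) (rA j)) (linop_appZ (linA i j)) //; exact: dom_resolvent.
Qed.

Lemma schur_entryZ i j a y :
  schur_entry AresA l i j (a *: y) = a *: schur_entry AresA l i j y.
Proof.
rewrite /schur_entry /= !AresZ scalerDr; congr (_ + _).
by case: (i != j); rewrite ?scaler0 // AresZ.
Qed.

Lemma schurR_entryE j :
  schurR A l j lam = (\sum_(i | i != l) opnorm (schur_entry AresA l i j))%E.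
Proof. by []. Qed.

Lemma res_bound_unif :
  exists cR, 0 <= cR /\ forall j (y : X j), rnorm (r j y) <= cR * rnorm y.
Proof.
apply: (finite_uniform_bound (P := fun j c => forall y : X j, rnorm (r j y) <= c * rnorm y)).
  by move=> j c c' h cc' y; apply: le_trans (h y) _; rewrite ler_wpM2r ?rnorm_ge0.
by move=> j; exact: res_bounded (rA j).
Qed.

Lemma Ares_bound_unif :
  exists cB, 0 <= cB /\ forall i j (y : X j), rnorm (Ares i j y) <= cB * rnorm y.
Proof.
have [cR [cR0 hcR]] := res_bound_unif.
pose cd := complex.Re `|lam| * cR + 1.
have cd0 : 0 <= cd by rewrite addr_ge0 // mulr_ge0 // Re_ge0.
have diag j y : rnorm (Ares j j y) <= cd * rnorm y.
  rewrite /Ares (res_app (rA j)); apply: le_trans (ler_rnormD _ _) _.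
  by rewrite rnormN rnormZ mulrDl mul1r lerD2r -mulrA ler_wpM2l ?Re_ge0.
pose P (p : 'I_n * 'I_n) c := forall y : X p.2, rnorm (Ares p.1 p.2 y) <= c * rnorm y.
have [|[i j] /=|cB [cB0 hcB]] := finite_uniform_bound (P := P).
- by move=> p c c' h cc' y; apply: le_trans (h y) _; rewrite ler_wpM2r ?rnorm_ge0.
- have [->|ij] := eqVneq i j; first by exists cd; split => //; exact: diag.
  case: (relbA ij) => _ [a [b [a0 [b0 hab]]]].
  exists (complex.Re a * cR + complex.Re b * cd); split.
    by rewrite addr_ge0 // mulr_ge0 // Re_ge0.
  move=> y; have := hab _ (res_dom (rA j) y).
  rewrite !rnormE (ge0_ReE a0) (ge0_ReE b0) -!rmorphM -rmorphD lecR => /le_trans; apply.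
  rewrite mulrDl -!mulrA; apply: lerD; apply: ler_wpM2l; rewrite ?Re_ge0 //.
  exact: diag.
- by exists cB; split => // i j y; exact: (hcB (i, j)).
Qed.

Lemma schur_col_bound_unif : exists q, [/\ 0 <= q, q < 1 &
  forall j, j != l -> forall y : X j,
    \sum_(i | i != l) rnorm (schur_entry AresA l i j y) <= q * rnorm y].
Proof.
pose s j := fine (schurR A l j lam).
have s_prop j : j != l -> [/\ 0 <= s j, s j < 1 & forall y : X j,
    \sum_(i | i != l) rnorm (schur_entry AresA l i j y) <= s j * rnorm y].
  move=> jl; have lt1 := schur_lt1 jl.
  have ge0 i : (0 <= opnorm (schur_entry AresA l i j))%E.
    by apply: opnorm_ge0; exact: schur_entryZ.
  have S0 : (0 <= schurR A l j lam)%E by rewrite schurR_entryE sume_ge0.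
  have sE : schurR A l j lam = (s j)%:E.
    by rewrite /s fineK // ge0_fin_numE // (lt_trans lt1) ?ltry.
  split; [by rewrite -lee_fin -sE | by rewrite -lte_fin -sE |] => y.
  rewrite -lee_fin -sumEFin EFinM -sE schurR_entryE ge0_sume_distrl //.
  by apply: lee_sum => i _; apply: opnorm_le; exact: schur_entryZ.
exists (\big[Order.max/0]_(j | j != l) s j); split.
- exact: bigmax_ge_id.
- by apply: bigmax_lt => // j jl; case: (s_prop j jl).
- move=> j jl y; case: (s_prop j jl) => _ _ h; apply: le_trans (h y) _.
  apply: ler_wpM2r; first exact: rnorm_ge0.
  exact: (le_bigmax_cond (P := fun j => j != l) 0 s jl).
Qed.

Lemma mx_app_resolvents (z : forall i, X i) i :
  lam *: r i (z i) - mx_app A (fun j => r j (z j)) i = id_sub_offdiag AresA z i.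
Proof.
rewrite /mx_app /id_sub_offdiag (bigD1 i) //= (res_app (rA i)) opprD addrA.
by congr (_ - _); rewrite opprB addrC subrK.
Qed.

Lemma notin_mx_spectrum : ~ mx_spectrum A lam.
Proof.
have [q [q0 q1 colb]] := schur_col_bound_unif.
have [cB [cB0 hcB]] := Ares_bound_unif.
have [cR [cR0 hcR]] := res_bound_unif.
have [M [M0 hM]] := id_sub_offdiag_bounded_below q0 q1 colb cB0 hcB.
have /choice [Z hZ] := id_sub_offdiag_surj q0 q1 colb.
have T_inj z z' : id_sub_offdiag AresA z = id_sub_offdiag AresA z' -> z = z'.
  move=> e; apply: pdist_eq0; apply/eqP; rewrite eq_le pdist_ge0 andbT.
  apply: le_trans (hM _) _; rewrite -[leRHS](mulr0 M) ler_wpM2l //.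
  have -> : id_sub_offdiag AresA (fun i => z i - z' i) = fun i => 0.
    by apply: functional_extensionality_dep => i; rewrite id_sub_offdiagB e subrr.
  by rewrite pnorm0.
move=> []; exists (fun y j => r j (Z y j)); split; [|split; [|split]].
- by move=> y i; exact: res_dom (rA i) _.
- by move=> y i; rewrite mx_app_resolvents hZ.
- move=> x dx; pose z j := lam *: x j - app (A j j) (x j).
  have xE : x = fun j => r j (z j).
    by apply: functional_extensionality_dep => j; rewrite res_inv.
  have -> : (fun i => lam *: x i - mx_app A x i) = id_sub_offdiag AresA z.
    by apply: functional_extensionality_dep => i; rewrite xE mx_app_resolvents.
  by rewrite (T_inj _ _ (hZ _)) [RHS]xE.
- exists ((cR * M)%:C)%C => y; rewrite !sumnormE -rmorphM lecR.
  apply: le_trans (_ : cR * pnorm (Z y) <= _).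
    by rewrite /pnorm mulr_sumr; apply: ler_sum => j _; exact: hcR.
  by rewrite -mulrA ler_wpM2l //; have := hM (Z y); rewrite hZ.
Qed.

End SchurComplement.

Lemma notin_schur_set (R : realType) (n : nat) (X : 'I_n -> completeNormedModType R[i])
    (A : forall i j : 'I_n, op (X j) (X i)) (k j : 'I_n) (lam : R[i]) :
  j != k -> ~ schur_set A k lam ->
  [/\ ~ spectrum (A k k) lam, ~ spectrum (A j j) lam & (schurR A k j lam < 1)%E].
Proof.
move=> jk notS; have notS2 : ~ schur_set2 A k j lam by move=> h; apply: notS; exists j.
have sk : ~ spectrum (A k k) lam by move=> h; apply: notS2; left; left.
have sj : ~ spectrum (A j j) lam by move=> h; apply: notS2; left; right.
by split=> //; rewrite ltNge; apply/negP => h; apply: notS2; right.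
Qed.

Theorem theorem4p1 (R : realType) (n : nat)
    (X : 'I_n -> completeNormedModType R[i])
    (A : forall i j : 'I_n, op (X j) (X i)) :
  (2 <= n)%N ->
  (forall i j, linear_op (A i j)) ->
  (forall i, closed_op (A i i)) ->
  (forall i j, i != j -> rel_bounded (A i j) (A j j)) ->
  (forall k (hk : (k <= n)%N), (2 <= k)%N -> mx_closed (cornermx hk A)) ->
  (forall k (hk : (k <= n)%N), (2 <= k)%N -> (k <= n.-1)%N ->
     forall kk : 'I_n, kk.+1 = k ->
     exists lam : R[i], ~ spectrum (A kk kk) lam /\ ~ mx_spectrum (cornermx hk A) lam) ->
  forall l : 'I_n, l.+1 = n ->
  mx_spectrum A `<=` schur_set A l.
Proof.
move=> n2 linA _ relbA _ _ l nl lam; apply: contraPP => notS.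
have j0l : Ordinal (ltnW n2) != l by apply/eqP => /(congr1 val) /= l0; move: n2; rewrite -nl -l0.
apply: (notin_mx_spectrum linA relbA) => [j|j jl]; last by case: (notin_schur_set jl notS).
have [->|jl] := eqVneq j l; first by case: (notin_schur_set j0l notS).
by case: (notin_schur_set jl notS).
Qed.
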